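(* Let $\mathcal{A}$ be a class of continuous nondecreasing functions $\mathbb{R}\to\mathbb{R}$ such that for every compact $K\subset\mathbb{R}$, every continuous nondecreasing $h:K\to\mathbb{R}$ and every $\eta>0$ there is $\alpha\in\mathcal{A}$ with $\sup_{x\in K}|h(x)-\alpha(x)|<\eta$. Let $F:[0,1]^d\to\mathbb{R}$ be of the form $F(\boldsymbol{x})=\sum_{i=1}^N\psi_i(\boldsymbol{a}_i^\top\boldsymbol{x}+b_i)$ with $\boldsymbol{a}_i\in\mathbb{R}^d$, $b_i\in\mathbb{R}$ and each $\psi_i\in C^1(\mathbb{R})$ convex. Then for every $\epsilon>0$ there exist $M\ge1$, $\boldsymbol{W}\in\mathbb{R}^{M\times d}$, $\boldsymbol{c}\in\mathbb{R}^M$, $\boldsymbol{b}\in\mathbb{R}^d$ and $\sigma_1,\dots,\sigma_M\in\mathcal{A}$ such that, with $\sigma(\boldsymbol{z})=(\sigma_1(z_1),\dots,\sigma_M(z_M))$, $$\sup_{\boldsymbol{x}\in[0,1]^d}\|\nabla F(\boldsymbol{x})-(\boldsymbol{W}^\top\sigma(\boldsymbol{W}\boldsymbol{x}+\boldsymbol{c})+\boldsymbol{b})\|<\epsilon,$$ and each such approximator is the gradient of a convex function on $\mathbb{R}^d$.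
   Context: $C^1(\mathbb{R})$ denotes continuously differentiable real functions on $\mathbb{R}$. $\|\cdot\|$ is the Euclidean norm. *)

From HB Require Import structures.
From mathcomp Require Import all_boot all_order all_algebra.
From mathcomp Require Import all_classical all_reals all_analysis.
Set Implicit Arguments. Unset Strict Implicit. Unset Printing Implicit Defensive.
Import Order.TTheory GRing.Theory Num.Theory.
Import numFieldNormedType.Exports.
Local Open Scope classical_set_scope.
Local Open Scope ring_scope.

Definition convex_fun (R : realType) (V : lmodType R) (f : V -> R) : Prop :=
  forall (x y : V) (t : R), 0 <= t -> t <= 1 ->
    f (t *: x + (1 - t) *: y) <= t * f x + (1 - t) * f y.

Definition C1 (R : realType) (f : R -> R) : Prop :=
  (forall x : R, derivable f x 1) /\ continuous (derive1 f).

Definition enorm (R : realType) (d : nat) (v : 'cV[R]_d) : R :=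
  Num.sqrt (\sum_(k < d) (v k ord0) ^+ 2).

Definition grad (R : realType) (d : nat) (f : 'cV[R]_d -> R) (x : 'cV[R]_d)
  : 'cV[R]_d :=
  \col_(i < d) ('D_(delta_mx i ord0) f x).

Definition unit_cube (R : realType) (d : nat) : set 'cV[R]_d :=
  [set x | forall k : 'I_d, 0 <= x k ord0 <= 1].

Definition dotv (R : realType) (d : nat) (a x : 'cV[R]_d) : R :=
  \sum_(k < d) a k ord0 * x k ord0.

Definition act (R : realType) (M : nat) (s : 'I_M -> R -> R) (z : 'cV[R]_M)
  : 'cV[R]_M := \col_(j < M) s j (z j ord0).

Definition net (R : realType) (d M : nat) (W : 'M[R]_(M, d)) (c : 'cV[R]_M)
  (b : 'cV[R]_d) (s : 'I_M -> R -> R) (x : 'cV[R]_d) : 'cV[R]_d :=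
  W^T *m act s (W *m x + c) + b.

From HB Require Import structures.
From mathcomp Require Import all_boot all_order all_algebra.
From mathcomp Require Import all_classical all_reals all_analysis.
From mathcomp Require Import lra ring.
Import Order.TTheory GRing.Theory Num.Theory.
Import numFieldNormedType.Exports.
Local Open Scope classical_set_scope.
Local Open Scope ring_scope.

Set Implicit Arguments.
Unset Strict Implicit.
Unset Printing Implicit Defensive.

(* The gradient of [F] is the ridge field x |-> \sum_i psi_i'(a_i.x + b_i) a_i,
   and each psi_i' is continuous and nondecreasing since psi_i is convex and C^1.
   For x in the unit cube the arguments a_i.x + b_i stay in [-r_i, r_i] with
   r_i = \sum_k |a_ik| + |b_i|, so replacing psi_i' by an activation alpha_i that
   is eta-close to it there moves the field by at most (\sum_ik |a_ik|) eta.  The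
   network with rows a_i, biases b_i and activations alpha_i, padded with one
   zero neuron so that M >= 1, computes exactly the new field.  Conversely, when
   every sigma_j is continuous and nondecreasing, W^T sigma(Wx + c) + b is the
   gradient of x |-> \sum_j Phi_j(w_j.x + c_j) + b.x, with Phi_j a primitive of
   sigma_j, and each Phi_j is convex because its derivative is nondecreasing. *)

Section DirectionalDerivatives.
Variables (R : realType) (V : normedModType R).

Lemma derive_affine_line (k : V -> R) x v c :
  (forall h : R, k (h *: v + x) = h * c + k x) -> 'D_v k x = c.
Proof.
move=> hk; rewrite /derive; apply: lim_near_cst; first exact: Rhausdorff.
near=> h.
have h0 : h != 0 by near: h; exact: nbhs_dnbhs_neq.
by rewrite /= hk addrK [_ *: _]mulrA mulVf // mul1r.
Unshelve. all: by end_near. Qed.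

Lemma derive_comp_real (f : R -> R) (k : V -> R) x v :
  differentiable k x -> derivable f (k x) 1 ->
  'D_v (f \o k) x = derive1 f (k x) * 'D_v k x.
Proof.
move=> dk /derivable1_diffP df.
rewrite deriveE; last exact: differentiable_comp.
by rewrite diff_comp //= diff1E // (deriveE _ dk) mulrC.
Qed.

End DirectionalDerivatives.

Section ConvexRealFunctions.
Variable R : realType.
Implicit Types f Phi : R -> R.

Lemma convex_derive1_le_secant01 f :
  convex_fun f -> derivable f 0 1 -> derive1 f 0 <= f 1 - f 0.
Proof.
move=> cf df.
set q := fun h : R => h^-1 *: ((f \o shift 0) (h *: 1) - f 0).
have q0 : q @ 0^' --> derive1 f 0 by rewrite derive1E; exact: df.
have q0r : q @ 0^'+ --> derive1 f 0.
  move=> A /q0 /nbhs_ballP [_ /posnumP[e] xe_A].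
  by exists e%:num => //= y xe_y; rewrite lt_def => /andP [y0 _]; apply: xe_A.
apply: (cvgr_to_le q0r); near=> h.
have h0 : 0 < h by near: h; exact: nbhs_right_gt.
have h1 : h <= 1 by near: h; apply: nbhs_right_le; exact: ltr01.
have := cf 1 0 h (ltW h0) h1.
rewrite scaler0 addr0 /q /= [h *: 1]mulr1 addr0 => cvx.
have slope : f h - f 0 <= h * (f 1 - f 0) by rewrite mulrBr mulrBl mul1r in cvx *; lra.
by rewrite [_ *: _]mulrC ler_pdivrMr // mulrC.
Unshelve. all: by end_near. Qed.

Lemma convex_derive1_support f x y :
  convex_fun f -> (forall t, derivable f t 1) -> derive1 f x * (y - x) <= f y - f x.
Proof.
move=> cf df.
pose k u : R := u * (y - x) + x.
have cfk : convex_fun (f \o k).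
  move=> p q t t0 t1; rewrite /k /=.
  have -> : (t *: p + (1 - t) *: q) * (y - x) + x =
      t *: (p * (y - x) + x) + (1 - t) *: (q * (y - x) + x).
    by rewrite /GRing.scale /=; ring.
  exact: cf.
have dk : differentiable k 0.
  apply: differentiableD; last exact: differentiable_cst.
  by apply: differentiableM; last exact: differentiable_cst.
have k' : 'D_1 k 0 = y - x.
  by apply: derive_affine_line => h; rewrite /k /GRing.scale /=; ring.
have dfk : derivable (f \o k) 0 1.
  by apply/derivable1_diffP/differentiable_comp => //; apply/derivable1_diffP.
have := convex_derive1_le_secant01 cfk dfk.
by rewrite derive1E derive_comp_real // k' /k /= mul0r add0r mul1r subrK.
Qed.

Lemma convex_derive1_homo f :
  convex_fun f -> (forall t, derivable f t 1) -> {homo derive1 f : x y / x <= y}.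
Proof.
move=> cf df x y; rewrite le_eqVlt => /orP[/eqP -> //|xy].
have := convex_derive1_support x y cf df; have := convex_derive1_support y x cf df.
nra.
Qed.

Lemma convex_of_support Phi (g : R -> R) :
  (forall z y, Phi z + g z * (y - z) <= Phi y) -> convex_fun Phi.
Proof.
move=> supp x y t t0 t1.
set z := t *: x + (1 - t) *: y.
have : t * (Phi z + g z * (x - z)) + (1 - t) * (Phi z + g z * (y - z)) <=
       t * Phi x + (1 - t) * Phi y.
  by apply: lerD; apply: ler_wpM2l => //; rewrite subr_ge0.
have -> : t * (Phi z + g z * (x - z)) + (1 - t) * (Phi z + g z * (y - z)) =
    Phi z + g z * ((t *: x + (1 - t) *: y) - z) by rewrite /GRing.scale /=; ring.
by rewrite subrr mulr0 addr0.
Qed.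

Lemma derive1_homo_support Phi z y :
  (forall t, derivable Phi t 1) -> {homo derive1 Phi : x y / x <= y} ->
  Phi z + derive1 Phi z * (y - z) <= Phi y.
Proof.
move=> dP mP.
have cP : continuous Phi.
  by move=> t; apply/differentiable_continuous/derivable1_diffP.
have isd t : is_derive t (1 : R) Phi (derive1 Phi t).
  by rewrite derive1E; exact: derivableP.
have MVT_between u v : u <= v ->
    exists2 c, u <= c <= v & Phi v - Phi u = derive1 Phi c * (v - u).
  move=> uv; have [c] := MVT_segment uv (fun t _ => isd t) (continuous_subspaceT cP).
  by rewrite in_itv /=; exists c.
case: (leP z y) => [zy|yz].
- have [c /andP[zc _] E] := MVT_between z y zy.
  have := mP z c zc; nra.
- have [c /andP[_ cz] E] := MVT_between y z (ltW yz).
  have := mP c z cz; nra.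
Qed.

Lemma convex_of_derive1_homo Phi :
  (forall t, derivable Phi t 1) -> {homo derive1 Phi : x y / x <= y} -> convex_fun Phi.
Proof.
move=> dP mP; apply: (@convex_of_support _ (derive1 Phi)) => z y.
exact: derive1_homo_support.
Qed.

End ConvexRealFunctions.

Section Primitive.
Variables (R : realType) (s : R -> R).
Hypothesis cs : continuous s.
Local Notation mu := (@lebesgue_measure R).
Local Notation pint a y := (parameterized_integral mu a y s).

Let integrable_s a y : mu.-integrable `[a, y] (EFin \o s).
Proof.
apply: continuous_compact_integrable; first exact: segment_compact.
exact: continuous_subspaceT.
Qed.

Lemma parameterized_integral_split a m y : a <= m -> m <= y ->
  pint a y = pint a m + pint m y.
Proof.
move=> am my.
have := @Rintegral_itvB R s (BLeft a) (BRight y) m (integrable_s a y).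
rewrite !bnd_simp => /(_ am my); rewrite Rintegral_itv_obnd_cbnd.
  by rewrite /parameterized_integral; lra.
by apply: integrableS (integrable_s a y) => //; apply: subset_itvr; rewrite bnd_simp.
Qed.

Lemma parameterized_integral_lower a m y : a <= m -> m <= y -> m <= 0 ->
  pint m y - pint m 0 = pint a y - pint a 0.
Proof.
move=> am my m0.
by rewrite (parameterized_integral_split am my) (parameterized_integral_split am m0); ring.
Qed.

(* Normalized by [antiderivative 0 = 0]; the lower bound of integration moves
   with [y] because [s] need not be integrable on a half-line. *)
Let antiderivative y := pint (- (`|y| + 1)) y - pint (- (`|y| + 1)) 0.

Let antiderivative_near x :
  exists2 a, a < x & \forall y \near x, pint a y - pint a 0 = antiderivative y.
Proof.
exists (- (`|x| + 2)); first by have := lerNnormlW (lexx `|x|); lra.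
near=> y.
have xy : `|x - y| < 1 by near: y; apply/nbhs_ballP; exists 1 => //=; exact: ltr01.
have y_bound : `|y| <= `|x| + `|x - y|.
  by have := ler_normB x (x - y); rewrite (_ : x - (x - y) = y) //; ring.
have := ler_norm y; have := lerNnormlW (lexx `|y|) => *.
by apply/esym/parameterized_integral_lower; lra.
Unshelve. all: by end_near. Qed.

Lemma continuous_primitive :
  exists Phi : R -> R, (forall x, derivable Phi x 1) /\ derive1 Phi = s.
Proof.
suff antiderivativeP x : derivable antiderivative x 1 /\ derive1 antiderivative x = s x.
  exists antiderivative; split => [x|]; last apply/funext => x; by case: (antiderivativeP x).
have [a ax near_Phia] := antiderivative_near x.
have [dPint Pint'] := continuous_FTC1_closed (ltr_pwDr ltr01 (lexx x))
  (integrable_s a (x + 1)) ax (@cs x).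
have dPhia : derivable (fun y => pint a y - pint a 0) x 1.
  exact: derivableB dPint (derivable_cst _ _ _).
split; first exact: (@near_eq_derivable _ _ _ _ antiderivative _ _ near_Phia dPhia).
rewrite derive1E -(@near_eq_derive _ _ _ _ antiderivative x 1 near_Phia).
by rewrite (deriveB dPint (derivable_cst _ _ _)) derive_cst subr0 -derive1E.
Qed.

End Primitive.

Lemma sumr_sqr_le_sqr_sumr (R : realDomainType) (I : Type) (r : seq I) (f : I -> R) :
  (forall i, 0 <= f i) -> \sum_(i <- r) f i ^+ 2 <= (\sum_(i <- r) f i) ^+ 2.
Proof.
move=> f0; elim: r => [|i r IH]; first by rewrite !big_nil expr0n.
have S0 : 0 <= \sum_(j <- r) f j by exact: sumr_ge0.
by rewrite !big_cons; have := f0 i; nra.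
Qed.

Section DotProduct.
Variables (R : realType) (d : nat).
Implicit Types u v x y : 'cV[R]_d.

Lemma dotv_lincomb u p q x y :
  dotv u (p *: x + q *: y) = p * dotv u x + q * dotv u y.
Proof.
by rewrite /dotv !mulr_sumr -big_split; apply: eq_bigr => k _; rewrite !mxE /=; ring.
Qed.

Lemma dotv_delta u k : dotv u (delta_mx k ord0) = u k ord0.
Proof.
rewrite /dotv (bigD1 k) //= !mxE !eqxx mulr1 big1 ?addr0 // => l lk.
by rewrite !mxE (negbTE lk) mulr0.
Qed.

Lemma differentiable_dotv u x : differentiable (dotv u) x.
Proof.
have -> : dotv u = \sum_(k < d) (fun y : 'cV[R]_d => u k ord0 * y k ord0).
  by apply/funext => y; rewrite fct_sumE.
apply: differentiable_sum => k.
exact: (differentiableM (differentiable_cst _ _) (differentiable_coord _ _ _)).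
Qed.

Lemma derive_dotv u x v : 'D_v (dotv u) x = dotv u v.
Proof.
by apply: derive_affine_line => h; rewrite -[x in LHS]scale1r dotv_lincomb mul1r.
Qed.

Lemma grad_dotv u x : grad (dotv u) x = u.
Proof. by apply/matrixP => k o; rewrite !mxE derive_dotv dotv_delta (ord1 o). Qed.

Lemma convex_dotv u : convex_fun (dotv u).
Proof. by move=> x y t _ _; rewrite dotv_lincomb. Qed.

Lemma dotv_unit_cube u x : unit_cube x -> `|dotv u x| <= \sum_(k < d) `|u k ord0|.
Proof.
move=> xc; apply: le_trans (ler_norm_sum _ _ _) _; apply: ler_sum => k _.
have /andP[x0 x1] := xc k.
by rewrite normrM (ger0_norm x0) ler_piMr.
Qed.

Lemma enorm_le_sum u : enorm u <= \sum_(k < d) `|u k ord0|.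
Proof.
have S0 : 0 <= \sum_(k < d) `|u k ord0| by exact: sumr_ge0.
rewrite /enorm -(ger0_norm S0) -sqrtr_sqr ler_sqrt ?sqr_ge0 //.
under eq_bigr do rewrite -real_normK ?num_real //.
exact: sumr_sqr_le_sqr_sumr.
Qed.

End DotProduct.

Definition ridge (R : realType) (d n : nat) (g : 'I_n -> R -> R)
  (u : 'I_n -> 'cV[R]_d) (e : 'I_n -> R) (x : 'cV[R]_d) : R :=
  \sum_(i < n) g i (dotv (u i) x + e i).

Definition ridge_field (R : realType) (d n : nat) (g : 'I_n -> R -> R)
  (u : 'I_n -> 'cV[R]_d) (e : 'I_n -> R) (x : 'cV[R]_d) : 'cV[R]_d :=
  \col_k \sum_(i < n) g i (dotv (u i) x + e i) * u i k ord0.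

Section RidgeFunctions.
Variables (R : realType) (d n : nat) (u : 'I_n -> 'cV[R]_d) (e : 'I_n -> R).
Implicit Types (g h : 'I_n -> R -> R) (x v : 'cV[R]_d).

Let affine i y := dotv (u i) y + e i.

Let ridgeE g : ridge g u e = \sum_(i < n) (g i \o affine i).
Proof. by apply/funext => y; rewrite fct_sumE. Qed.

Let differentiable_affine i x : differentiable (affine i) x.
Proof. exact: differentiableD (differentiable_dotv _ _) (differentiable_cst _ _). Qed.

Let derive_affine i x v : 'D_v (affine i) x = dotv (u i) v.
Proof.
rewrite deriveD ?derive_dotv ?derive_cst ?addr0 //.
by apply: diff_derivable; exact: differentiable_dotv.
Qed.

Section DerivableProfiles.
Variable g : 'I_n -> R -> R.
Hypothesis dg : forall i t, derivable (g i) t 1.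

Let differentiable_term i x : differentiable (g i \o affine i) x.
Proof. by apply: differentiable_comp; [exact: differentiable_affine|apply/derivable1_diffP]. Qed.

Lemma differentiable_ridge x : differentiable (ridge g u e) x.
Proof. by rewrite ridgeE; apply: differentiable_sum. Qed.

Lemma derive_ridge x v :
  'D_v (ridge g u e) x = \sum_(i < n) derive1 (g i) (dotv (u i) x + e i) * dotv (u i) v.
Proof.
rewrite ridgeE derive_sum; last by move=> i; exact: diff_derivable.
by apply: eq_bigr => i _; rewrite derive_comp_real // derive_affine.
Qed.

Lemma grad_ridge x : grad (ridge g u e) x = ridge_field (fun i => derive1 (g i)) u e x.
Proof.
apply/matrixP => k o; rewrite !mxE derive_ridge.
by apply: eq_bigr => i _; rewrite dotv_delta.
Qed.

End DerivableProfiles.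

Lemma convex_ridge g : (forall i, convex_fun (g i)) -> convex_fun (ridge g u e).
Proof.
move=> cg x y t t0 t1; rewrite /ridge !mulr_sumr -big_split /=.
apply: ler_sum => i _.
have -> : dotv (u i) (t *: x + (1 - t) *: y) + e i =
    t *: (dotv (u i) x + e i) + (1 - t) *: (dotv (u i) y + e i).
  by rewrite dotv_lincomb /GRing.scale /=; ring.
exact: cg.
Qed.

Lemma ridge_field_approx g h x eta :
  unit_cube x ->
  (forall i t, `|t| <= \sum_(k < d) `|u i k ord0| + `|e i| -> `|g i t - h i t| <= eta) ->
  enorm (ridge_field g u e x - ridge_field h u e x) <=
    (\sum_(k < d) \sum_(i < n) `|u i k ord0|) * eta.
Proof.
move=> xc gh; apply: le_trans (enorm_le_sum _) _.
rewrite mulr_suml; apply: ler_sum => k _; rewrite mulr_suml !mxE -sumrB.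
apply: le_trans (ler_norm_sum _ _ _) _; apply: ler_sum => i _.
rewrite -mulrBl normrM mulrC ler_wpM2l //; apply: gh.
by apply: le_trans (ler_normD _ _) _; rewrite lerD2r dotv_unit_cube.
Qed.

End RidgeFunctions.

Definition pad_act (T : Type) (m n : nat) (s : 'I_m -> T -> T) (s' : 'I_n -> T -> T)
  (j : 'I_(m + n)) : T -> T :=
  match fintype.split j with inl i => s i | inr i => s' i end.

Section Networks.
Variable R : realType.

Lemma convex_funD (V : lmodType R) (f g : V -> R) :
  convex_fun f -> convex_fun g -> convex_fun (f + g).
Proof.
move=> cf cg x y t t0 t1; rewrite /= !mulrDr addrACA.
by apply: lerD; [exact: cf|exact: cg].
Qed.

Lemma gradD d (f g : 'cV[R]_d -> R) x :
  differentiable f x -> differentiable g x -> grad (f + g) x = grad f x + grad g x.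
Proof.
by move=> df dg; apply/matrixP => k o; rewrite !mxE deriveD //; apply: diff_derivable.
Qed.

Lemma net_ridge_field d M (W : 'M[R]_(M, d)) c b s x :
  net W c b s x = ridge_field s (fun j => (row j W)^T) (fun j => c j ord0) x + b.
Proof.
apply/matrixP => k o; rewrite (ord1 o) !mxE; congr (_ + _); apply: eq_bigr => j _.
rewrite !mxE mulrC; congr (_ * _); congr (s j (_ + _)).
by apply: eq_bigr => l _; rewrite !mxE.
Qed.

Lemma act_col_mx m n (s : 'I_m -> R -> R) (s' : 'I_n -> R -> R) z z' :
  act (pad_act s s') (col_mx z z') = col_mx (act s z) (act s' z').
Proof.
apply/matrixP => j o; rewrite -[j]splitK.
by case: (fintype.split j) => i; rewrite /pad_act !mxE unsplitK !mxE.
Qed.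

Lemma net_pad d m n (W : 'M[R]_(m, d)) c b s (s' : 'I_n -> R -> R) x :
  net (col_mx W 0) (col_mx c 0) b (pad_act s s') x = net W c b s x.
Proof.
rewrite /net mul_col_mx add_col_mx mul0mx addr0 act_col_mx tr_col_mx trmx0.
by rewrite mul_row_col mul0mx addr0.
Qed.

Lemma net_convex_potential d M (W : 'M[R]_(M, d)) c b (s : 'I_M -> R -> R) :
  (forall j, continuous (s j)) -> (forall j, {homo s j : x y / x <= y}) ->
  exists G : 'cV[R]_d -> R,
    [/\ convex_fun G, forall x, differentiable G x & forall x, grad G x = net W c b s x].
Proof.
move=> cs ms.
have [Phi HPhi] := fin_all_exists (fun j => continuous_primitive (cs j)).
have dPhi j := (HPhi j).1; have Phi' j : derive1 (Phi j) = s j := (HPhi j).2.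
pose u j := (row j W)^T; pose e j := c j ord0.
have dG x : differentiable (ridge Phi u e) x by exact: differentiable_ridge.
exists (ridge Phi u e + dotv b); split.
- apply: convex_funD; last exact: convex_dotv.
  apply: convex_ridge => j; apply: convex_of_derive1_homo => //.
  by rewrite Phi'.
- by move=> x; apply: differentiableD => //; exact: differentiable_dotv.
- move=> x; rewrite gradD ?grad_ridge ?grad_dotv //; last exact: differentiable_dotv.
  by rewrite net_ridge_field (_ : (fun j => derive1 (Phi j)) = s) //; apply/funext.
Qed.

End Networks.

Theorem corollary2 (R : realType) (A : set (R -> R))
  (hA_cont : forall alpha, A alpha -> continuous alpha)
  (hA_mono : forall alpha, A alpha -> {homo alpha : x y / x <= y})
  (hA_dense : forall (K : set R) (h : R -> R) (eta : R),
      compact K ->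
      {within K, continuous h} ->
      (forall x y, K x -> K y -> x <= y -> h x <= h y) ->
      0 < eta ->
      exists2 alpha, A alpha &
        exists2 delta : R, delta < eta &
          forall x, K x -> `|h x - alpha x| <= delta)
  (d N : nat) (a : 'I_N -> 'cV[R]_d) (b0 : 'I_N -> R) (psi : 'I_N -> R -> R)
  (hpsi_C1 : forall i, C1 (psi i))
  (hpsi_cvx : forall i, convex_fun (psi i))
  (eps : R) (heps : 0 < eps) :
  let F := fun x : 'cV[R]_d => \sum_(i < N) psi i (dotv (a i) x + b0 i) in
  exists (M : nat) (W : 'M[R]_(M, d)) (c : 'cV[R]_M) (b : 'cV[R]_d)
         (s : 'I_M -> R -> R),
    [/\ (0 < M)%N,
        (forall j, A (s j)),
        (exists2 delta : R, delta < eps &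
           forall x, unit_cube x -> enorm (grad F x - net W c b s x) <= delta) &
        exists G : 'cV[R]_d -> R,
          [/\ convex_fun G,
              (forall x, differentiable G x) &
              (forall x, grad G x = net W c b s x)]].
Proof.
move=> F.
have dpsi i t : derivable (psi i) t 1 := (hpsi_C1 i).1 t.
have [al0 Aal0 _] := hA_dense _ (cst 0) _ (@segment_compact R 0 1)
  (continuous_subspaceT (@cst_continuous _ _ 0)) (fun _ _ _ _ _ => lexx 0) ltr01.
set S := \sum_(k < d) \sum_(i < N) `|a i k ord0|.
have S0 : 0 <= S by apply: sumr_ge0 => k _; apply: sumr_ge0.
set eta := eps / (S + 1).
have S1 : 0 < S + 1 := ltr_wpDl S0 ltr01.
have eta0 : 0 < eta := divr_gt0 heps S1.
have S_eta : S * eta < eps by rewrite mulrA ltr_pdivrMr // mulrDr mulr1 mulrC ltrDl.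
pose r i := \sum_(k < d) `|a i k ord0| + `|b0 i|.
have approx i : exists2 al, A al &
    forall t, `|t| <= r i -> `|derive1 (psi i) t - al t| <= eta.
  have [al Aal [del del_eta approx]] := hA_dense [set` `[- r i, r i]] (derive1 (psi i)) _
    (@segment_compact R _ _)
    (continuous_subspaceT (hpsi_C1 i).2)
    (fun x y _ _ => @convex_derive1_homo _ _ (hpsi_cvx i) (dpsi i) x y) eta0.
  exists al => // t t_le; apply: le_trans (ltW del_eta); apply: approx.
  by rewrite /= in_itv /= -ler_norml.
have [alpha Aalpha alphaE] := fin_all_exists2 approx.
pose W0 : 'M[R]_(N, d) := \matrix_i (a i)^T.
pose s := pad_act alpha (fun _ : 'I_1 => al0).
have As j : A (s j) by rewrite /s /pad_act; case: fintype.split.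
have netE x : net (col_mx W0 0) (col_mx (\col_i b0 i) 0) 0 s x = ridge_field alpha a b0 x.
  rewrite net_pad net_ridge_field addr0; congr ridge_field; apply/funext => i.
    by rewrite rowK trmxK.
  by rewrite mxE.
exists (N + 1)%N, (col_mx W0 0), (col_mx (\col_i b0 i) 0), 0, s; split.
- by rewrite addn1.
- exact: As.
- exists (S * eta) => // x xc.
  by rewrite netE grad_ridge //; exact: ridge_field_approx.
- by apply: net_convex_potential => j; [exact: hA_cont | exact: hA_mono].
Qed.
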